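(* Let $(A,\mathfrak m)$ and $(B,\mathfrak n)$ be Noetherian local rings and let $f:A\to B$ be a local ring homomorphism satisfying going-down. Then: (a) $\operatorname{cdim}(B)\le\operatorname{cdim}(A)+\operatorname{cdim}(B/\mathfrak mB)$; (b) if $B/\mathfrak mB$ is regular, then $\operatorname{cdim}(B)\le\operatorname{cdim}(A)$.
   Context: For a Noetherian local ring $(R,\mathfrak r)$, $\operatorname{edim}(R)=\dim_{R/\mathfrak r}(\mathfrak r/\mathfrak r^2)$ and $\operatorname{cdim}(R):=\operatorname{edim}(R)-\dim(R)$, with $\dim$ the Krull dimension. $\mathfrak mB=f(\mathfrak m)B$. A ring homomorphism $h:R\to S$ satisfies going-down if for primes $p\subseteq q$ of $R$ and any prime $Q$ of $S$ lying over $q$ there is a prime $P\subseteq Q$ of $S$ lying over $p$. *)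

From HB Require Import structures.
From mathcomp Require Import all_boot all_order all_algebra.
Set Implicit Arguments. Unset Strict Implicit. Unset Printing Implicit Defensive.
Import Order.TTheory GRing.Theory Num.Theory.
Local Open Scope ring_scope.

Section CommAlg.
Variable R : comNzRingType.

Definition subset_of (I J : R -> Prop) := forall x, I x -> J x.

Definition is_ideal (I : R -> Prop) : Prop :=
  [/\ I 0, (forall x y, I x -> I y -> I (x + y)) &
      (forall r x, I x -> I (r * x))].

Definition proper_ideal (I : R -> Prop) := is_ideal I /\ ~ I 1.

Definition prime_ideal (P : R -> Prop) : Prop :=
  proper_ideal P /\ (forall a b, P (a * b) -> P a \/ P b).

Definition maximal_ideal (M : R -> Prop) : Prop :=
  proper_ideal M /\
  (forall J, proper_ideal J -> subset_of M J -> subset_of J M).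

Definition local_ring (m : R -> Prop) : Prop :=
  maximal_ideal m /\ (forall M, maximal_ideal M -> forall x, M x <-> m x).

Definition gen_by (s : seq R) (x : R) : Prop :=
  exists r : seq R, size r = size s /\
    x = \sum_(i < size s) r`_i * s`_i.

Definition noetherian : Prop :=
  forall I, is_ideal I -> exists s : seq R, forall x, I x <-> gen_by s x.

Definition prod_ideal (I J : R -> Prop) (x : R) : Prop :=
  exists s : seq (R * R), (forall p, p \in s -> I p.1 /\ J p.2) /\
    x = \sum_(p <- s) p.1 * p.2.

Definition prime_chain (P : nat -> R -> Prop) (n : nat) : Prop :=
  (forall i, (i <= n)%N -> prime_ideal (P i)) /\
  (forall i, (i < n)%N -> subset_of (P i) (P i.+1) /\
                         exists x, P i.+1 x /\ ~ P i x).

Definition krull_dim (n : nat) : Prop :=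
  (exists P, prime_chain P n) /\ ~ (exists P, prime_chain P n.+1).

(* embedding dimension of (R, m) = n: dim_{R/m} (m/m^2) = n, i.e.
   there are x_0..x_{n-1} in m whose classes form an R/m-basis of m/m^2 *)
Definition embdim (m : R -> Prop) (n : nat) : Prop :=
  exists x : 'I_n -> R,
    [/\ (forall i, m (x i)),
        (forall r : 'I_n -> R, prod_ideal m m (\sum_i r i * x i) ->
           forall i, m (r i)) &
        (forall y, m y -> exists r : 'I_n -> R,
           prod_ideal m m (y - \sum_i r i * x i))].

Definition regular_local (m : R -> Prop) : Prop :=
  exists d, krull_dim d /\ embdim m d.

End CommAlg.

Section Maps.
Variables A B : comNzRingType.
Variable f : {rmorphism A -> B}.

Definition lies_over (Q : B -> Prop) (q : A -> Prop) :=
  forall a, Q (f a) <-> q a.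

Definition going_down : Prop :=
  forall (p q : A -> Prop) (Q : B -> Prop),
    prime_ideal p -> prime_ideal q -> subset_of p q ->
    prime_ideal Q -> lies_over Q q ->
    exists P : B -> Prop, [/\ prime_ideal P, subset_of P Q & lies_over P p].

Definition ext_ideal (I : A -> Prop) (b : B) : Prop :=
  exists s : seq (B * A), (forall p, p \in s -> I p.2) /\
    b = \sum_(p <- s) p.1 * f p.2.

Definition img (I : A -> Prop) (b : B) : Prop := exists a, I a /\ f a = b.
End Maps.

(* Part (b) is part (a) with cdim(B/mB) = 0, and (a) splits into
   edim B <= edim A + edim (B/mB) and dim A + dim (B/mB) <= dim B.
   For the first, the images of generators of m/m^2 together with lifts of
   generators of the maximal ideal of B/mB span n/n^2, and a free family in
   n/n^2 is never longer than a spanning one (a determinant argument modulo n).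
   For the second, a chain of primes of B/mB pulls back to a chain of B whose
   bottom contains mB; going-down then lifts a chain of A, whose top lies in m,
   below it. *)
From Pilot Require Import Defs.
From mathcomp Require Import all_boot all_order all_algebra.
From mathcomp Require Import fingroup perm zify ring.
From Stdlib Require Import Classical IndefiniteDescription.
Import Order.TTheory GRing.Theory Num.Theory.
Import Pilot.Defs. (* so that [proper_ideal] is not MathComp's homonym *)
Local Open Scope ring_scope.
Set Implicit Arguments. Unset Strict Implicit.

Section Ideals.
Variable R : comNzRingType.
Implicit Types (I J : R -> Prop) (x y : R).

Lemma ideal0 I : is_ideal I -> I 0. Proof. by case. Qed.

Lemma idealD I x y : is_ideal I -> I x -> I y -> I (x + y).
Proof. by case=> _ + _; apply. Qed.

Lemma idealMl I r x : is_ideal I -> I x -> I (r * x).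
Proof. by case=> _ _; apply. Qed.

Lemma idealMr I r x : is_ideal I -> I x -> I (x * r).
Proof. by rewrite mulrC; apply: idealMl. Qed.

Lemma idealN I x : is_ideal I -> I x -> I (- x).
Proof. by rewrite -mulN1r; apply: idealMl. Qed.

Lemma idealB I x y : is_ideal I -> I x -> I y -> I (x - y).
Proof. by move=> hI hx hy; apply: idealD => //; apply: idealN. Qed.

Lemma ideal_sum I (T : Type) (r : seq T) (P : pred T) (F : T -> R) :
  is_ideal I -> (forall i, P i -> I (F i)) -> I (\sum_(i <- r | P i) F i).
Proof. by move=> hI; apply: big_ind => //; [apply: ideal0 | move=> *; apply: idealD]. Qed.

Lemma prod_ideal_ideal I J : is_ideal I -> is_ideal (prod_ideal I J).
Proof.
move=> hI; split.
- by exists [::]; rewrite big_nil.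
- move=> _ _ [s [hs ->]] [t [ht ->]]; exists (s ++ t); rewrite big_cat; split=> // p.
  by rewrite mem_cat => /orP[]; [apply: hs | apply: ht].
- move=> r _ [s [hs ->]]; exists [seq (r * p.1, p.2) | p <- s]; split.
    by move=> _ /mapP[q /hs[? ?] ->]; split=> //; apply: idealMl.
  by rewrite big_map big_distrr; apply: eq_bigr => p _ /=; rewrite mulrA.
Qed.

Lemma prod_idealM I J a b : I a -> J b -> prod_ideal I J (a * b).
Proof. by exists [:: (a, b)]; rewrite big_seq1; split=> // p; rewrite inE => /eqP->. Qed.

Lemma gen_by_mem (s : seq R) y : y \in s -> gen_by s y.
Proof.
move=> ys; have ltys : (index y s < size s)%N by rewrite index_mem.
exists (mkseq (fun j => (j == index y s)%:R) (size s)); rewrite size_mkseq; split=> //.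
rewrite (bigD1 (Ordinal ltys)) //= nth_mkseq // eqxx mul1r nth_index //.
rewrite big1 ?addr0 // => j neq_j; rewrite nth_mkseq //.
suff /negbTE-> : val j != index y s by rewrite mul0r.
by apply: contra neq_j => /eqP eq_j; apply/eqP/val_inj.
Qed.

Lemma gen_by_sub I (s : seq R) : is_ideal I -> (forall y, y \in s -> I y) ->
  subset_of (gen_by s) I.
Proof.
move=> hI hs _ [r [_ ->]]; apply: ideal_sum => // i _.
by apply: idealMl => //; apply/hs/mem_nth.
Qed.

Lemma noetherian_ascending_chain (I : nat -> R -> Prop) : noetherian R ->
  (forall k, is_ideal (I k)) -> (forall k, subset_of (I k) (I k.+1)) ->
  exists K, forall k, subset_of (I k) (I K).
Proof.
move=> hN hI incrI.
have mono k l : (k <= l)%N -> subset_of (I k) (I l).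
  elim: l => [|l IHl]; first by rewrite leqn0 => /eqP->.
  by rewrite leq_eqVlt => /orP[/eqP-> //|/IHl kl] x /kl /incrI.
pose U x := exists k, I k x.
have hU : is_ideal U.
  split; first by exists 0%N; apply: ideal0.
    move=> x y [k hx] [l hy]; exists (maxn k l).
    by apply: idealD; [|apply: (mono k) | apply: (mono l)]; rewrite ?leq_maxl ?leq_maxr.
  by move=> r x [k hx]; exists k; apply: idealMl.
have [s genU] := hN U hU.
have [idx hidx] : exists idx : R -> nat, forall y, U y -> I (idx y) y.
  apply: (functional_choice (fun y k => U y -> I k y)) => y.
  by have [[k hk]|nUy] := classic (U y); [exists k | exists 0%N].
exists (\max_(y <- s) idx y) => k x hx.
have /gen_by_sub : forall y, y \in s -> I (\max_(y <- s) idx y) y.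
  move=> y ys; apply: (mono (idx y)); first exact: leq_bigmax_seq.
  by apply/hidx/genU/gen_by_mem.
by apply; [apply: hI | apply/genU; exists k].
Qed.

Lemma noetherian_maximal_above I : noetherian R -> proper_ideal I ->
  exists M, maximal_ideal M /\ subset_of I M.
Proof.
move=> hN hI; apply: NNPP => no_max.
pose over := {J : R -> Prop | proper_ideal J /\ subset_of I J}.
have [next hnext] : exists next : over -> over, forall J : over,
    subset_of (sval J) (sval (next J)) /\ exists x, sval (next J) x /\ ~ sval J x.
  apply: (functional_choice (fun J J' : over => subset_of (sval J) (sval J') /\
    exists x, sval J' x /\ ~ sval J x)) => -[J [pJ IJ]] /=; apply: NNPP => no_next.
  apply: no_max; exists J; split=> //; split=> // J' pJ' JJ' x J'x.
  apply: NNPP => nJx; apply: no_next.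
  by exists (exist _ J' (conj pJ' (fun y Iy => JJ' y (IJ y Iy)))); split=> //; exists x.
pose J0 : over := exist _ I (conj hI (fun x Ix => Ix)).
have [|k|K hK] := @noetherian_ascending_chain (fun k => sval (iter k next J0)) hN.
- by move=> k /=; case: (iter k next J0) => J [[]].
- exact: (hnext _).1.
- by have [_ [x [xK1 /(_ (hK K.+1 x xK1))]]] := hnext (iter K next J0).
Qed.

Lemma local_proper_sub m I : noetherian R -> local_ring m -> proper_ideal I ->
  subset_of I m.
Proof.
move=> hN [_ uniq_m] /(noetherian_maximal_above hN)[M [maxM IM]] x /IM.
exact: (uniq_m M maxM x).1.
Qed.

End Ideals.

Section Cotangent.
Variable R : comNzRingType.
Variable n : R -> Prop.
Hypothesis n_ideal : is_ideal n.

Definition cotangent_span k (x : 'I_k -> R) (y : R) :=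
  exists r : 'I_k -> R, prod_ideal n n (y - \sum_i r i * x i).

Definition cotangent_free k (x : 'I_k -> R) :=
  forall r : 'I_k -> R, prod_ideal n n (\sum_i r i * x i) -> forall i, n (r i).

Lemma det_sub1_ideal N (M : 'M[R]_N) :
  (forall i j, n (M i j - (i == j)%:R)) -> n (\det M - 1).
Proof.
move=> hM; rewrite /determinant (bigD1 (1%g : 'S_N)) //= odd_perm1 expr0 mul1r addrAC.
apply: idealD => //.
  apply: (big_ind (fun x => n (x - 1))); first by rewrite subrr; apply: ideal0.
    move=> x y hx hy; rewrite (_ : x * y - 1 = x * (y - 1) + (x - 1)); last by ring.
    by apply: idealD => //; apply: idealMl.
  by move=> i _; rewrite perm1; move: (hM i i); rewrite eqxx.
apply: ideal_sum => // s s_neq1.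
have /existsP[i si_neq] : [exists i, s i != i].
  apply: contraR s_neq1 => /existsPn fix_s; apply/eqP/permP => i.
  by rewrite perm1; apply/eqP; move: (fix_s i); rewrite negbK.
apply: idealMl => //; rewrite (bigD1 i) //=; apply: idealMr => //.
by move: (hM i (s i)); rewrite eq_sym (negbTE si_neq) subr0.
Qed.

Lemma cotangent_base_change N (z w : 'I_N -> R) (C D : 'M[R]_N) :
  cotangent_free z ->
  (forall i, prod_ideal n n (z i - \sum_j C i j * w j)) ->
  (forall j, prod_ideal n n (w j - \sum_l D j l * z l)) ->
  forall i l, n ((C *m D) i l - (i == l)%:R).
Proof.
move=> z_free zC wD i; apply: z_free.
have n2_ideal := prod_ideal_ideal n n_ideal.
pose Dz j := \sum_l D j l * z l.
have -> : \sum_l ((C *m D) i l - (i == l)%:R) * z l = \sum_j C i j * Dz j - z i.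
  rewrite (eq_bigr (fun l => (C *m D) i l * z l - (i == l)%:R * z l)) => [|l _];
    last by rewrite mulrBl.
  have sum_delta : \sum_l (i == l)%:R * z l = z i.
    rewrite (bigD1 i) //= eqxx mul1r big1 ?addr0 // => l /negbTE.
    by rewrite eq_sym => ->; rewrite mul0r.
  rewrite sumrB sum_delta; congr (_ - _).
  rewrite (eq_bigr (fun l => \sum_j C i j * (D j l * z l))) => [|l _].
    by rewrite exchange_big; apply: eq_bigr => j _; rewrite big_distrr.
  by rewrite mxE big_distrl; apply: eq_bigr => j _; rewrite mulrA.
have -> : \sum_j C i j * Dz j - z i
    = - (z i - \sum_j C i j * w j) - \sum_j C i j * (w j - Dz j).
  suff -> : \sum_j C i j * (w j - Dz j) = \sum_j C i j * w j - \sum_j C i j * Dz j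
    by ring.
  by rewrite -sumrB; apply: eq_bigr => j _; rewrite mulrBr.
apply: idealB => //; first exact: idealN.
by apply: ideal_sum => // j _; apply: idealMl.
Qed.

Definition pad0 k (d : 'I_k -> R) (j : nat) : R :=
  if insub j is Some i then d i else 0.

Lemma pad0_ord k (d : 'I_k -> R) (i : 'I_k) : pad0 d i = d i.
Proof. by rewrite /pad0 valK. Qed.

Lemma pad0_out k (d : 'I_k -> R) j : (k <= j)%N -> pad0 d j = 0.
Proof. by move=> le_kj; rewrite /pad0 insubN // -leqNgt. Qed.

Lemma sum_pad0 k N (d e : 'I_k -> R) : (k <= N)%N ->
  \sum_(j < N) pad0 d j * pad0 e j = \sum_(j < k) d j * e j.
Proof.
move=> le_kN; rewrite [RHS](eq_bigr (fun j : 'I_k => pad0 d j * pad0 e j)) => [|j _];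
  last by rewrite !pad0_ord.
rewrite [RHS](big_ord_widen N (fun j => pad0 d j * pad0 e j)) // [RHS]big_mkcond.
by apply: eq_bigr => j _; case: ltnP => // /pad0_out->; rewrite mul0r.
Qed.

Lemma cotangent_free_card_le N k (z : 'I_N -> R) (w : 'I_k -> R) : ~ n 1 ->
  cotangent_free z -> (forall y, n y -> cotangent_span z y) ->
  (forall j, n (w j)) -> (forall i, cotangent_span w (z i)) -> (N <= k)%N.
Proof.
move=> n1 z_free z_span w_n w_span; rewrite leqNgt; apply/negP => lt_kN.
have [c hc] := functional_choice _ w_span.
have padw_n j : n (pad0 w j) by rewrite /pad0; case: insub => [i|]; last exact: ideal0.
have [d hd] := functional_choice _ (fun j : 'I_N => z_span _ (padw_n j)).
(* Padding [w] with zeros to length N gives a square coefficient matrix C with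
   a zero column, while C D = 1 modulo n. *)
pose C : 'M_N := \matrix_(i, j) pad0 (c i) j.
have detC : \det C = 0.
  rewrite (expand_det_col C (Ordinal lt_kN)) big1 // => i _.
  by rewrite mxE pad0_out ?mul0r.
have zC i : prod_ideal n n (z i - \sum_j C i j * pad0 w j).
  rewrite (eq_bigr (fun j : 'I_N => pad0 (c i) j * pad0 w j)) => [|j _];
    last by rewrite mxE.
  by rewrite sum_pad0 ?(ltnW lt_kN).
pose D : 'M_N := \matrix_(j, l) d j l.
have wD (j : 'I_N) : prod_ideal n n (pad0 w j - \sum_l D j l * z l).
  by rewrite (eq_bigr (fun l => d j l * z l)) // => l _; rewrite mxE.
have := det_sub1_ideal (cotangent_base_change z_free zC wD).
by rewrite det_mulmx detC mul0r sub0r => /(idealN n_ideal); rewrite opprK.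
Qed.

Lemma embdim_le_span e k (w : 'I_k -> R) : ~ n 1 -> embdim n e ->
  (forall j, n (w j)) -> (forall y, n y -> cotangent_span w y) -> (e <= k)%N.
Proof.
move=> n1 [z [z_n z_free z_span]] w_n w_span.
exact: cotangent_free_card_le n1 z_free z_span w_n (fun i => w_span _ (z_n i)).
Qed.

End Cotangent.

Section ImageIdeals.
Variables R S : comNzRingType.
Variable phi : {rmorphism R -> S}.

Lemma prod_ideal_rmorph (I : R -> Prop) (J : S -> Prop) x :
  (forall x, I x -> J (phi x)) -> prod_ideal I I x -> prod_ideal J J (phi x).
Proof.
move=> IJ [s [hs ->]]; exists [seq (phi p.1, phi p.2) | p <- s]; split.
  by move=> _ /mapP[q /hs[? ?] ->]; split; apply: IJ.
by rewrite rmorph_sum big_map; apply: eq_bigr => p _; rewrite rmorphM.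
Qed.

Lemma prod_ideal_img (I : R -> Prop) y : is_ideal I ->
  prod_ideal (img phi I) (img phi I) y -> exists x, prod_ideal I I x /\ phi x = y.
Proof.
move=> hI [s [hs ->]]; elim: s hs => [|p s IHs] hs.
  exists 0; rewrite big_nil rmorph0; split=> //.
  by apply: ideal0; apply: prod_ideal_ideal.
have [x [hx phix]] := IHs (fun q qs => hs q (mem_behead (s := p :: s) qs)).
have [[u [Iu phiu]] [v [Iv phiv]]] := hs p (mem_head _ _).
exists (u * v + x); rewrite big_cons rmorphD rmorphM phiu phiv phix; split=> //.
by apply: idealD (prod_idealM _ _) hx => //; apply: prod_ideal_ideal.
Qed.

Lemma cotangent_span_ext_ideal (m : R -> Prop) (n : S -> Prop) k (x : 'I_k -> R) :
  is_ideal n -> (forall a, m a -> n (phi a)) ->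
  (forall y, m y -> cotangent_span m x y) ->
  forall y, ext_ideal phi m y -> cotangent_span n (fun i => phi (x i)) y.
Proof.
move=> n_ideal mn x_span _ [s [hs ->]].
have n2_ideal := prod_ideal_ideal n n_ideal.
elim: s hs => [|p s IHs] hs.
  exists (fun=> 0); rewrite big_nil big1 ?subr0 => [|i _]; last by rewrite mul0r.
  exact: ideal0.
have [c hc] := IHs (fun q qs => hs q (mem_behead (s := p :: s) qs)).
have [r hr] := x_span _ (hs p (mem_head _ _)).
exists (fun i => p.1 * phi (r i) + c i).
have := prod_ideal_rmorph mn hr; rewrite rmorphB rmorph_sum => hfr.
have -> : \sum_(q <- p :: s) q.1 * phi q.2 - \sum_i (p.1 * phi (r i) + c i) * phi (x i)
    = p.1 * (phi p.2 - \sum_i phi (r i * x i))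
      + (\sum_(q <- s) q.1 * phi q.2 - \sum_i c i * phi (x i)).
  rewrite big_cons (eq_bigr (fun i => p.1 * phi (r i * x i) + c i * phi (x i)));
    last by move=> i _; rewrite rmorphM mulrDl mulrA.
  by rewrite big_split -big_distrr /=; ring.
by apply: idealD => //; apply: idealMl.
Qed.

End ImageIdeals.

Definition cat_fam (T : Type) a b (u : 'I_a -> T) (v : 'I_b -> T) (j : 'I_(a + b)) : T :=
  match split j with inl i => u i | inr i => v i end.

Lemma sum_cat_fam (R : comNzRingType) a b (r u : 'I_a -> R) (s v : 'I_b -> R) :
  \sum_j cat_fam r s j * cat_fam u v j = \sum_i r i * u i + \sum_i s i * v i.
Proof.
rewrite big_split_ord /cat_fam; congr (_ + _); apply: eq_bigr => i _.
  by rewrite -[lshift b i]/(unsplit (inl i)) unsplitK.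
by rewrite -[rshift a i]/(unsplit (inr i)) unsplitK.
Qed.

Lemma embdim_le_add (A B C : comNzRingType)
    (f : {rmorphism A -> B}) (g : {rmorphism B -> C})
    (m : A -> Prop) (n : B -> Prop) eA eB eC :
  is_ideal n -> ~ n 1 -> (forall a, m a -> n (f a)) ->
  (forall c, exists b, g b = c) -> (forall b, g b = 0 <-> ext_ideal f m b) ->
  embdim m eA -> embdim n eB -> embdim (img g n) eC -> (eB <= eA + eC)%N.
Proof.
move=> n_ideal n1 mn g_surj ker_g [x [x_m _ x_span]] eBn [z [z_n _ z_span]].
have [y hy] := functional_choice _ z_n.
have [sec hsec] := functional_choice _ g_surj.
apply: (embdim_le_span n_ideal n1 eBn (w := cat_fam (fun i => f (x i)) y)).
  by move=> j; rewrite /cat_fam; case: split => i; [apply/mn/x_m | case: (hy i)].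
move=> b nb.
have [r hr] := z_span (g b) (ex_intro _ b (conj nb erefl)).
have [b2 [b2_n2 gb2]] := prod_ideal_img n_ideal hr.
pose e := b - \sum_i sec (r i) * y i - b2.
have /ker_g e_mB : g e = 0.
  rewrite !rmorphB rmorph_sum gb2 (eq_bigr (fun i => r i * z i)) ?subrr // => i _.
  by rewrite rmorphM hsec; case: (hy i) => _ ->.
have [c hc] := cotangent_span_ext_ideal n_ideal mn x_span e_mB.
exists (cat_fam c (fun i => sec (r i))); rewrite sum_cat_fam.
have -> : b - (\sum_i c i * f (x i) + \sum_i sec (r i) * y i)
    = (e - \sum_i c i * f (x i)) + b2 by rewrite /e; ring.
by apply: idealD => //; apply: prod_ideal_ideal.
Qed.

Section PrimeChains.
Variable R : comNzRingType.
Implicit Types P Q : nat -> R -> Prop.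

Lemma prime_chain_trunc P k l : prime_chain P k -> (l <= k)%N -> prime_chain P l.
Proof.
by move=> [P_prime P_incr] le_lk; split=> i lt_il; [apply: P_prime | apply: P_incr];
  apply: leq_trans lt_il le_lk.
Qed.

Lemma krull_dim_chain_le d P k : krull_dim R d -> prime_chain P k -> (k <= d)%N.
Proof.
move=> [_ no_longer] P_chain; rewrite leqNgt; apply/negP => lt_dk.
by apply: no_longer; exists P; apply: prime_chain_trunc P_chain lt_dk.
Qed.

Lemma prime_chain_cat P Q a b : prime_chain P a -> prime_chain Q b ->
  subset_of (P a) (Q 0%N) ->
  prime_chain (fun i => if (i <= a)%N then P i else Q (i - a)%N) (a + b).
Proof.
move=> [P_prime P_incr] [Q_prime Q_incr] PQ; split=> i lt_i.
  by case: ifP => [le_ia | /negbT gt_ia]; [apply: P_prime | apply: Q_prime]; lia.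
case: (ltngtP i a) => [lt_ia | lt_ai | eq_ia].
- exact: P_incr.
- by rewrite subSn ?(ltnW lt_ai) //; apply: Q_incr; lia.
- subst i; rewrite subSnn; have [Q01 [x [Q1x nQ0x]]] := Q_incr 0%N ltac:(lia).
  by split=> [y /PQ /Q01 | ]; last by exists x; split=> // /PQ.
Qed.

End PrimeChains.

Lemma prime_ideal_preimage (R S : comNzRingType) (phi : {rmorphism R -> S})
  (P : S -> Prop) : prime_ideal P -> prime_ideal (fun x => P (phi x)).
Proof.
move=> [[[P0 PD PM] P1] P_prime]; split; [split; [split|] |].
- by rewrite rmorph0.
- by move=> x y Px Py; rewrite rmorphD; apply: PD.
- by move=> r x Px; rewrite rmorphM; apply: PM.
- by rewrite rmorph1.
- by move=> a b; rewrite rmorphM; apply: P_prime.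
Qed.

Lemma prime_chain_preimage (R S : comNzRingType) (phi : {rmorphism R -> S})
  (P : nat -> S -> Prop) d : (forall y, exists x, phi x = y) ->
  prime_chain P d -> prime_chain (fun i x => P i (phi x)) d.
Proof.
move=> phi_surj [P_prime P_incr]; split=> i lt_id.
  exact/prime_ideal_preimage/P_prime.
have [Pi1 [y [P1y nPy]]] := P_incr i lt_id; have [x phix] := phi_surj y.
by split=> [z /Pi1 //|]; exists x; rewrite phix.
Qed.

Section GoingDown.
Variables A B : comNzRingType.
Variable f : {rmorphism A -> B}.
Hypothesis f_going_down : going_down f.

Lemma going_down_chain d P (q : A -> Prop) (Q : B -> Prop) :
  prime_chain P d -> prime_ideal q -> subset_of (P d) q ->
  prime_ideal Q -> lies_over f Q q ->
  exists R, [/\ prime_chain R d, lies_over f (R d) (P d) & subset_of (R d) Q].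
Proof.
elim: d P q Q => [|d IHd] P q Q P_chain q_prime Pq Q_prime Q_over.
  have [Q' [Q'_prime Q'Q Q'_over]] :=
    f_going_down (P_chain.1 0%N (leqnn _)) q_prime Pq Q_prime Q_over.
  by exists (fun=> Q'); split=> //; split=> [i _ | i] //.
have [Q' [Q'_prime Q'Q Q'_over]] :=
  f_going_down (P_chain.1 d.+1 (leqnn _)) q_prime Pq Q_prime Q_over.
have [Pd_incr [x [P1x nPx]]] := P_chain.2 d (leqnn _).
have [R [R_chain R_over RQ']] :=
  IHd P _ Q' (prime_chain_trunc P_chain (leqnSn d)) (P_chain.1 d.+1 (leqnn _))
    Pd_incr Q'_prime Q'_over.
exists (fun i => if i == d.+1 then Q' else R i); rewrite eqxx; split=> //.
split=> i lt_id.
  by case: eqP => [_ // | ne_id]; apply: R_chain.1; lia.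
rewrite (ltn_eqF lt_id) eqSS; case: eqP => [-> | ne_id1]; last by apply: R_chain.2; lia.
by split=> //; exists (f x); split; [apply/Q'_over | move/R_over].
Qed.

End GoingDown.

Lemma krull_dim_add_le (A B C : comNzRingType)
    (f : {rmorphism A -> B}) (g : {rmorphism B -> C}) (m : A -> Prop) dA dB dC :
  noetherian A -> local_ring m -> going_down f ->
  (forall c, exists b, g b = c) -> (forall b, g b = 0 <-> ext_ideal f m b) ->
  krull_dim A dA -> krull_dim B dB -> krull_dim C dC -> (dA + dC <= dB)%N.
Proof.
move=> A_noeth m_local f_gd g_surj ker_g [[P P_chain] _] dimB [[Q Q_chain] _].
have Qg_chain := prime_chain_preimage g_surj Q_chain.
have Qg0_prime := Qg_chain.1 0%N (leq0n _).
have m_Qgf a : m a -> Q 0%N (g (f a)).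
  move=> ma; have /ker_g-> : ext_ideal f m (f a).
    by exists [:: (1, a)]; rewrite big_seq1 mul1r; split=> // p; rewrite inE => /eqP->.
  exact: ideal0 (Q_chain.1 0%N (leq0n _)).1.1.
have P_m := local_proper_sub A_noeth m_local (P_chain.1 dA (leqnn _)).1.
have [R [R_chain _ RQ]] := going_down_chain f_gd P_chain
  (prime_ideal_preimage f Qg0_prime) (fun a Pa => m_Qgf a (P_m a Pa)) Qg0_prime
  (fun a => iff_refl _).
exact: krull_dim_chain_le dimB (prime_chain_cat R_chain Qg_chain RQ).
Qed.

Theorem corollary2p4 (A B C : comNzRingType)
  (f : {rmorphism A -> B}) (g : {rmorphism B -> C})
  (m : A -> Prop) (n : B -> Prop) :
  noetherian A -> local_ring m ->
  noetherian B -> local_ring n ->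
  (forall a, m a -> n (f a)) ->
  going_down f ->
  (forall c : C, exists b, g b = c) ->
  (forall b, g b = 0 <-> ext_ideal f m b) ->
  (forall (dA eA dB eB dC eC : nat),
     krull_dim A dA -> embdim m eA ->
     krull_dim B dB -> embdim n eB ->
     krull_dim C dC -> embdim (img g n) eC ->
     (eB%:Z - dB%:Z <= (eA%:Z - dA%:Z) + (eC%:Z - dC%:Z))%R) /\
  (regular_local (img g n) ->
   forall (dA eA dB eB : nat),
     krull_dim A dA -> embdim m eA ->
     krull_dim B dB -> embdim n eB ->
     (eB%:Z - dB%:Z <= eA%:Z - dA%:Z)%R).
Proof.
move=> A_noeth m_local _ [[[n_ideal n1] _] _] mn f_gd g_surj ker_g.
have cdim_le dA eA dB eB dC eC : krull_dim A dA -> embdim m eA ->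
    krull_dim B dB -> embdim n eB -> krull_dim C dC -> embdim (img g n) eC ->
    (eB%:Z - dB%:Z <= (eA%:Z - dA%:Z) + (eC%:Z - dC%:Z))%R.
  move=> dimA edimA dimB edimB dimC edimC.
  have := embdim_le_add n_ideal n1 mn g_surj ker_g edimA edimB edimC.
  have := krull_dim_add_le A_noeth m_local f_gd g_surj ker_g dimA dimB dimC.
  lia.
split=> // -[d [dimC edimC]] dA eA dB eB dimA edimA dimB edimB.
by have := cdim_le _ _ _ _ _ _ dimA edimA dimB edimB dimC edimC; lia.
Qed.
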